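(* For $n\in\mathbb{N}_{\geq 1}$ let $c_n$ denote the minimal Colless index among all rooted binary trees with $n$ leaves. Then $c_1=c_2=0$, and for all $n\in\mathbb{N}_{\geq 1}$, $$c_{2n}=2c_n,\qquad c_{2n+1}=c_{n+1}+c_n+1.$$
   Context: A rooted binary tree with $n\geq 2$ leaves is a rooted tree whose root has degree 2 and all other internal (non-leaf) nodes have degree 3; for $n=1$ it is a single node (which is both root and leaf). For an internal node $v$ with children $v_1,v_2$, let $\kappa(v_i)$ be the number of leaves descending from $v_i$ (with $\kappa(v_i)=1$ if $v_i$ is a leaf). The Colless index of a rooted binary tree $T$ is $\mathcal{C}(T)=\sum_{v}|\kappa(v_1)-\kappa(v_2)|$, the sum over all internal nodes $v$ of $T$. *)

From mathcomp Require Import all_boot.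
Set Implicit Arguments. Unset Strict Implicit. Unset Printing Implicit Defensive.

(* Rooted binary trees: a leaf, or an internal node (root or degree-3 vertex)
   with exactly two (unordered in the paper; order is irrelevant here) children. *)
Inductive bintree : Type :=
| Leaf : bintree
| Node : bintree -> bintree -> bintree.

Fixpoint leaves (t : bintree) : nat :=
  match t with
  | Leaf => 1
  | Node l r => leaves l + leaves r
  end.

Fixpoint colless (t : bintree) : nat :=
  match t with
  | Leaf => 0
  | Node l r => colless l + colless r + (maxn (leaves l) (leaves r) - minn (leaves l) (leaves r))
  end.

Definition is_min_colless (n m : nat) : Prop :=
  (exists t, leaves t = n /\ colless t = m) /\
  (forall t, leaves t = n -> m <= colless t).

(* The minimum is attained by the maximally balanced tree, which splits [n]
   leaves into [uphalf n] and [n./2]; its Colless index obeys the two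
   recurrences by construction.  Minimality reduces, by induction on trees, to
   the inequality [c (a + b) <= c a + c b + (b - a)] for [a <= b], which is
   proved by strong induction on [a + b]: split [a] and [b] by parity and
   apply the induction hypothesis to two pairs of halves whose sums are the
   two halves of [a + b].  The boundary case [a = 1], where the recurrence
   for odd arguments fails, is the bound [c (b + 1) < c b + b]. *)

From mathcomp Require Import all_boot zify.

(* Fuel [k >= n] suffices, as both halves of [n > 1] are smaller than [n];
   [maxbal 0] is the junk value [Leaf]. *)
Fixpoint maxbal_fuel (k n : nat) : bintree :=
  if k is k'.+1 then
    if n <= 1 then Leaf else Node (maxbal_fuel k' (uphalf n)) (maxbal_fuel k' n./2)
  else Leaf.

Definition maxbal (n : nat) : bintree := maxbal_fuel n n.

Definition colless_maxbal (n : nat) : nat := colless (maxbal n).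

Lemma maxbal_fuelS k n : maxbal_fuel k.+1 n =
  if n <= 1 then Leaf else Node (maxbal_fuel k (uphalf n)) (maxbal_fuel k n./2).
Proof. by []. Qed.

Lemma maxbal_fuel_stable k m n :
  n <= k -> n <= m -> maxbal_fuel k n = maxbal_fuel m n.
Proof.
elim: k m n => [|k IH] [|m] n /= hnk hnm //.
- by rewrite ifT //; lia.
- by rewrite ifT //; lia.
- by case: ifP => // /negbT hn1; rewrite !(IH m) //; lia.
Qed.

Lemma maxbal_fuelE k n : n <= k -> maxbal_fuel k n = maxbal n.
Proof. by move=> hnk; apply: maxbal_fuel_stable. Qed.

Lemma maxbalE n : 1 < n -> maxbal n = Node (maxbal (uphalf n)) (maxbal n./2).
Proof.
case: n => [|n] // hn.
by rewrite {1}/maxbal maxbal_fuelS leqNgt hn /= !maxbal_fuelE //; lia.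
Qed.

Lemma leaves_maxbal n : 0 < n -> leaves (maxbal n) = n.
Proof.
elim/ltn_ind: n => n IH n_gt0.
have [n1|n_gt1] := leqP n 1; first by have -> : n = 1 by lia.
by rewrite maxbalE //= !IH; lia.
Qed.

Lemma colless_maxbalE n : 1 < n ->
  colless_maxbal n = colless_maxbal (uphalf n) + colless_maxbal n./2 + odd n.
Proof.
move=> hn; rewrite /colless_maxbal maxbalE //= !leaves_maxbal; lia.
Qed.

Lemma colless_maxbal0 : colless_maxbal 0 = 0. Proof. by []. Qed.

Lemma colless_maxbal1 : colless_maxbal 1 = 0. Proof. by []. Qed.

Lemma colless_maxbal_double n : colless_maxbal (2 * n) = 2 * colless_maxbal n.
Proof.
case: n => [|n]; first by [].
rewrite colless_maxbalE; last by lia.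
by rewrite !mul2n uphalf_double doubleK odd_double addn0 addnn.
Qed.

Lemma colless_maxbal_double_add1 n : 0 < n ->
  colless_maxbal (2 * n + 1) = colless_maxbal (n + 1) + colless_maxbal n + 1.
Proof.
move=> hn; rewrite colless_maxbalE; last by lia.
by rewrite addn1 mul2n /= uphalf_double doubleK odd_double [n + 1]addn1.
Qed.

Lemma colless_maxbal_succ_lt n : 0 < n ->
  colless_maxbal (n + 1) < colless_maxbal n + n.
Proof.
elim/ltn_ind: n => n IH n_gt0.
have [n1|n_gt1] := leqP n 1; first by have -> : n = 1 by lia.
have [y [hn|hn]] : exists y, n = 2 * y \/ n = 2 * y + 1 by exists n./2; lia.
all: have := IH y ltac:(lia) ltac:(lia); subst n.
- rewrite colless_maxbal_double_add1 ?colless_maxbal_double; lia.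
- rewrite (_ : 2 * y + 1 + 1 = 2 * (y + 1)); last by lia.
  rewrite colless_maxbal_double colless_maxbal_double_add1; lia.
Qed.

Lemma colless_maxbal_add_le a b : a <= b ->
  colless_maxbal (a + b) <= colless_maxbal a + colless_maxbal b + (b - a).
Proof.
have [s hs] := ubnP (a + b); elim: s a b hs => // s IH a b hs hab.
have {}IH a' b' : a' + b' < a + b -> a' <= b' ->
    colless_maxbal (a' + b') <= colless_maxbal a' + colless_maxbal b' + (b' - a').
  by move=> ? ?; apply: IH; lia.
have [->|a_gt0] := posnP a; first by rewrite add0n colless_maxbal0; lia.
have [a1|a_gt1] := leqP a 1.
  have -> : a = 1 by lia.
  have := @colless_maxbal_succ_lt b; rewrite addnC colless_maxbal1; lia.
have [x [ha|ha]] : exists x, a = 2 * x \/ a = 2 * x + 1 by exists a./2; lia.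
all: have [y [hb|hb]] : exists y, b = 2 * y \/ b = 2 * y + 1 by exists b./2; lia.
all: subst a b; have [x_gt0 y_gt0] : 0 < x /\ 0 < y by lia.
- have := IH x y; rewrite -mulnDr !colless_maxbal_double; lia.
- have := IH x y; have := IH x (y + 1); rewrite [x + (y + 1)]addnA.
  rewrite (_ : 2 * x + _ = 2 * (x + y) + 1); last by lia.
  rewrite (colless_maxbal_double x) (colless_maxbal_double_add1 _ y_gt0).
  rewrite (colless_maxbal_double_add1 _ (ltn_addr y x_gt0)); lia.
- have := IH x y; have := IH (x + 1) y; rewrite [x + 1 + y]addnAC.
  rewrite (_ : 2 * x + 1 + _ = 2 * (x + y) + 1); last by lia.
  rewrite (colless_maxbal_double y) (colless_maxbal_double_add1 _ x_gt0).
  rewrite (colless_maxbal_double_add1 _ (ltn_addr y x_gt0)); lia.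
- have [<-|nxy] := eqVneq x y.
    by rewrite addnn -mul2n colless_maxbal_double; lia.
  have := IH x (y + 1); have := IH (x + 1) y.
  rewrite [x + (y + 1)]addnA [x + 1 + y]addnAC.
  rewrite (_ : 2 * x + 1 + _ = 2 * (x + y + 1)); last by lia.
  rewrite (colless_maxbal_double (x + y + 1)).
  rewrite (colless_maxbal_double_add1 _ x_gt0) (colless_maxbal_double_add1 _ y_gt0); lia.
Qed.

Lemma colless_maxbal_le t : colless_maxbal (leaves t) <= colless t.
Proof.
elim: t => //= l IHl r IHr.
have [hlr|hrl] := leqP (leaves l) (leaves r).
- have := colless_maxbal_add_le _ _ hlr; lia.
- have := colless_maxbal_add_le _ _ (ltnW hrl); rewrite addnC; lia.
Qed.

Lemma is_min_colless_maxbal n : 0 < n -> is_min_colless n (colless_maxbal n).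
Proof.
move=> n_gt0; split; last by move=> t <-; apply: colless_maxbal_le.
by exists (maxbal n); rewrite leaves_maxbal.
Qed.

Theorem theorem1 (c : nat -> nat)
  (hc : forall n, 1 <= n -> is_min_colless n (c n)) :
  c 1 = 0 /\ c 2 = 0 /\
  (forall n, 1 <= n -> c (2 * n) = 2 * c n /\ c (2 * n + 1) = c (n + 1) + c n + 1).
Proof.
have cE n : 0 < n -> c n = colless_maxbal n.
  move=> n_gt0; have [[t [ht ct]] c_min] := hc n n_gt0.
  have [[u [hu cu]] _] := is_min_colless_maxbal _ n_gt0.
  have := c_min u hu; have := colless_maxbal_le t; rewrite ht; lia.
split; first by rewrite cE.
split; first by rewrite cE.
move=> n n_gt0.
by rewrite !cE ?colless_maxbal_double ?colless_maxbal_double_add1 //; lia.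
Qed.
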